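(* Let $n>1$ and $\lambda>1$. The reducing submodules $\mathbb A^{(\lambda)}_{\rm triv}(\mathbb D^n)$ and $\mathbb A^{(\lambda)}_{\rm sign}(\mathbb D^n)$ of $\mathbb A^{(\lambda)}(\mathbb D^n)$ over the ring $\mathbb C[z_1,\ldots,z_n]^{\mathfrak S_n}$ are not unitarily equivalent; i.e. there is no unitary $U:\mathbb A^{(\lambda)}_{\rm triv}(\mathbb D^n)\to\mathbb A^{(\lambda)}_{\rm sign}(\mathbb D^n)$ with $UM_f=M_fU$ for all symmetric polynomials $f$.
   Context: $\mathbb A^{(\lambda)}(\mathbb D^n)$ ($\lambda>1$) is the weighted Bergman space of holomorphic functions on $\mathbb D^n$ square integrable with respect to $\big(\frac{\lambda-1}{\pi}\big)^n\prod_i(1-|z_i|^2)^{\lambda-2}dV$, with reproducing kernel $\prod_i(1-z_i\bar w_i)^{-\lambda}$. $\mathfrak S_n$ acts by permuting coordinates; $\mathbb C[z_1,\dots,z_n]^{\mathfrak S_n}$ is the ring of symmetric polynomials acting by multiplication. $\mathbb A^{(\lambda)}_{\rm triv}(\mathbb D^n)$ is the subspace of symmetric functions ($f(\sigma\cdot z)=f(z)$ for all $\sigma$) and $\mathbb A^{(\lambda)}_{\rm sign}(\mathbb D^n)$ the subspace of antisymmetric functions ($f(\sigma\cdot z)=\operatorname{sgn}(\sigma)f(z)$) in $\mathbb A^{(\lambda)}(\mathbb D^n)$. *)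

From HB Require Import structures.
From mathcomp Require Import all_boot all_order all_algebra all_fingroup.
From mathcomp Require Import reals.
From mathcomp Require Import complex.
From mathcomp Require Import mpoly.
Set Implicit Arguments. Unset Strict Implicit. Unset Printing Implicit Defensive.
Import GRing.Theory Num.Theory.
Local Open Scope ring_scope.

(* An element of A^(lambda)(D^n) is represented by its Taylor coefficients
   f(z) = \sum_alpha a alpha z^alpha, alpha ranging over multi-indices. *)
Definition coeffs (R : realType) (n : nat) := 'X_{1..n} -> R[i].

Definition rising (R : realType) (l : R) (k : nat) : R :=
  \prod_(j < k) (l + j%:R).

(* ||z^alpha||^2 in A^(lambda)(D^n): the reproducing kernel
   prod_i (1 - z_i conj w_i)^(-lambda)
   = sum_alpha prod_i ((lambda)_{alpha_i}/alpha_i!) z^alpha conj(w)^alpha,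
   hence the monomials are orthogonal with ||z^alpha||^2 = prod_i alpha_i!/(lambda)_{alpha_i}. *)
Definition bweight (R : realType) (n : nat) (l : R) (m : 'X_{1..n}) : R :=
  \prod_(i < n) ((m i)`!%:R / rising l (m i)).

Definition sqmod (R : realType) (c : R[i]) : R := (complex.Re c) ^+ 2 + (complex.Im c) ^+ 2.

Definition bnorm2_le (R : realType) (n : nat) (l : R) (a : coeffs R n) (B : R) : Prop :=
  forall s : seq 'X_{1..n}, uniq s -> \sum_(m <- s) bweight l m * sqmod (a m) <= B.

Definition inBergman (R : realType) (n : nat) (l : R) (a : coeffs R n) : Prop :=
  exists B : R, bnorm2_le l a B.

(* coefficients of f(sigma . z), where (sigma . z)_i = z_(sigma i);
   consistent with mpoly's  (msym s p)@_m = p@_(m # s) *)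
Definition cperm (R : realType) (n : nat) (s : 'S_n) (a : coeffs R n) : coeffs R n :=
  fun m => a [multinom m (s i) | i < n].

Definition in_triv (R : realType) (n : nat) (l : R) (a : coeffs R n) : Prop :=
  inBergman l a /\ forall s : 'S_n, cperm s a = a.

Definition in_sign (R : realType) (n : nat) (l : R) (a : coeffs R n) : Prop :=
  inBergman l a /\ forall s : 'S_n, cperm s a = (fun m => (-1) ^+ odd_perm s * a m).

Definition mulop (R : realType) (n : nat) (p : {mpoly R[i][n]}) (a : coeffs R n)
  : coeffs R n :=
  fun m => \sum_(b <- msupp p) p@_b * (if (b <= m)%MM then a (m - b)%MM else 0).

Definition intertwining_unitary (R : realType) (n : nat) (l : R)
  (U : coeffs R n -> coeffs R n) : Prop :=
  [/\ (forall a, in_triv l a -> in_sign l (U a)),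
      (forall (c : R[i]) a b, in_triv l a -> in_triv l b ->
         U (fun m => c * a m + b m) = (fun m => c * U a m + U b m)),
      (forall a, in_triv l a -> forall B, bnorm2_le l a B <-> bnorm2_le l (U a) B),
      (forall b, in_sign l b -> exists2 a, in_triv l a & U a = b) &
      (forall p : {mpoly R[i][n]}, p \is symmetric ->
         forall a, in_triv l a -> U (mulop p a) = mulop p (U a))].

From HB Require Import structures.
From mathcomp Require Import all_boot all_order all_algebra all_fingroup.
From mathcomp Require Import reals.
From mathcomp Require Import complex.
From mathcomp Require Import mpoly.
From mathcomp Require Import ring lra.
From Stdlib Require Import FunctionalExtensionality.
Set Implicit Arguments. Unset Strict Implicit. Unset Printing Implicit Defensive.
Import Order.TTheory GRing.Theory Num.Theory.
Local Open Scope ring_scope.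

(* Let b be the image of the constant function 1 under U.  Being antisymmetric,
   b vanishes at the origin.  As e_n = z_1 ... z_n is symmetric, U maps
   z_1 ... z_n = e_n 1 to e_n b, so ||e_n b|| = ||z_1 ... z_n||.  Multiplication
   by e_n shifts multi-indices by (1, ..., 1), multiplying the weight of z^m by
   prod_i (m_i + 1) / (l + m_i); for m <> 0 this exceeds its value at m = 0,
   i.e. ||z_1 ... z_n||^2, by the factor 2 l / (l + 1) > 1.  Hence
   ||b||^2 <= (l + 1) / (2 l) < 1 = ||1||^2, contradicting the isometry. *)

Section Bergman.
Variables (R : realType) (n : nat).
Implicit Types (l : R) (a : coeffs R n) (m d : 'X_{1..n}).

Definition monom m0 : coeffs R n := fun m => (m == m0)%:R.

Definition mnm1 : 'X_{1..n} := [multinom 1%N | i < n].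

Lemma sqmod0 : sqmod (0 : R[i]) = 0.
Proof. by rewrite /sqmod /= expr0n /= addr0. Qed.

Lemma sqmod1 : sqmod (1 : R[i]) = 1.
Proof. by rewrite /sqmod /= expr0n /= addr0 expr1n. Qed.

Lemma sqmod_ge0 (c : R[i]) : 0 <= sqmod c.
Proof. by rewrite /sqmod addr_ge0 // sqr_ge0. Qed.

Lemma rising_gt0 l k : 0 < l -> 0 < rising l k.
Proof. by move=> l0; apply: prodr_gt0 => j _; rewrite ltr_wpDr. Qed.

Lemma bweight_gt0 l m : 0 < l -> 0 < bweight l m.
Proof.
move=> l0; apply: prodr_gt0 => i _.
by rewrite divr_gt0 ?ltr0n ?fact_gt0 ?rising_gt0.
Qed.

Lemma bweight0 l : bweight l (0%MM : 'X_{1..n}) = 1.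
Proof.
by apply: big1 => i _; rewrite mnm0E /rising big_ord0 fact0 divr1.
Qed.

Lemma bnorm2_le_coeff l a B m : bnorm2_le l a B -> bweight l m * sqmod (a m) <= B.
Proof. by move/(_ [:: m] isT); rewrite big_seq1. Qed.

Lemma bnorm2_le_monom l m0 : 0 < l -> bnorm2_le l (monom m0) (bweight l m0).
Proof.
move=> l0 s s_uniq.
rewrite (eq_bigr (fun m => if m == m0 then bweight l m0 else 0)) => [|m _]; last first.
  by rewrite /monom; case: eqP => [->|_]; rewrite ?sqmod1 ?sqmod0 ?mulr1 ?mulr0.
rewrite -big_mkcond big_const_seq -/(count_mem m0 s) count_uniq_mem //.
by case: (m0 \in s) => /=; [rewrite addr0 | apply/ltW/bweight_gt0].
Qed.

Lemma in_triv_monom l m0 : 0 < l -> (forall i j, m0 i = m0 j) -> in_triv l (monom m0).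
Proof.
move=> l0 m0_const; split; first by exists (bweight l m0); apply: bnorm2_le_monom.
move=> s; apply: functional_extensionality => m; rewrite /cperm /monom.
suff -> : ([multinom m (s i) | i < n] == m0) = (m == m0) by [].
apply/eqP/eqP => [/mnmP perm_m|->]; apply/mnmP => j.
  by have := perm_m (s^-1 j)%g; rewrite mnmE permKV (m0_const _ j).
by rewrite mnmE (m0_const _ j).
Qed.

Lemma sign_coeff_eq0 l a m (i j : 'I_n) :
  in_sign l a -> i != j -> m i = m j -> a m = 0.
Proof.
move=> [_ a_sign] ij mij.
have := congr1 (fun b => b m) (a_sign (tperm i j)); rewrite /cperm /=.
have -> : [multinom m (tperm i j k) | k < n] = m.
  by apply/mnmP => k; rewrite mnmE; case: tpermP => // ->.
rewrite odd_tperm ij expr1 mulN1r => /eqP.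
by rewrite -subr_eq0 opprK -mulr2n mulrn_eq0 => /eqP.
Qed.

Lemma mulopX d a m : mulop 'X_[d] a m = if (d <= m)%MM then a (m - d)%MM else 0.
Proof. by rewrite /mulop msuppX big_seq1 mcoeffX eqxx mul1r. Qed.

Lemma mulopX_shift d a m : mulop 'X_[d] a (m + d)%MM = a m.
Proof. by rewrite mulopX lem_addl addmK. Qed.

Lemma mulopX_monom d m0 : mulop 'X_[d] (monom m0) = monom (m0 + d)%MM.
Proof.
apply: functional_extensionality => m; rewrite mulopX /monom.
case: (boolP (d <= m)%MM) => [le_dm|le_dm].
  by rewrite -{2}(submK le_dm) eqm_add2r.
by case: eqP le_dm => // ->; rewrite lem_addl.
Qed.

Lemma mpolyX_const_sym d : (forall i j, d i = d j) -> ('X_[d] : {mpoly R[i][n]}) \is symmetric.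
Proof.
move=> d_const; apply/issymP => s; rewrite msymX; congr mpolyX; apply/mnmP => i.
by rewrite multinomE tnth_mktuple (d_const _ i).
Qed.

(* [bratio l k = ||z^(k+1)||^2 / ||z^k||^2] in one variable, see [fact_div_risingS];
   [bgain l = 2 l / (l + 1)] is the factor by which it grows once [k > 0]. *)
Definition bratio l (k : nat) : R := k.+1%:R / (l + k%:R).

Lemma bratio_gt0 l k : 0 < l -> 0 < bratio l k.
Proof. by move=> l0; rewrite divr_gt0 // ltr_wpDr. Qed.

Lemma bratio_homo l : 1 <= l -> {homo bratio l : k k' / (k <= k')%N >-> k <= k'}.
Proof.
move=> l1 k k' le_kk'; have l0 : 0 < l by apply: lt_le_trans l1.
have lek : 0 < l + k%:R by rewrite ltr_wpDr.
have lek' : 0 < l + k'%:R by rewrite ltr_wpDr.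
have : k%:R <= k'%:R :> R by rewrite ler_nat.
rewrite /bratio ler_pdivrMr // mulrAC ler_pdivlMr // -!natr1.
nra.
Qed.

Definition bgain l : R := bratio l 1 / bratio l 0.

Lemma bgain_gt1 l : 1 < l -> 1 < bgain l.
Proof.
move=> l1; have l0 : 0 < l by apply: lt_trans l1.
rewrite /bgain /bratio addr0 invf_div mulrA divr1 mulrAC ltr_pdivlMr ?ltr_wpDr //.
lra.
Qed.

Lemma fact_div_risingS l k : 0 < l ->
  k.+1`!%:R / rising l k.+1 = k`!%:R / rising l k * bratio l k.
Proof.
move=> l0; have lk : 0 < l + k%:R by rewrite ltr_wpDr.
have rk := rising_gt0 k l0.
rewrite factS natrM /rising big_ord_recr /= -/(rising l k) /bratio.
by field; rewrite !gt_eqF.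
Qed.

Lemma bweight_addmnm1 l m : 0 < l ->
  bweight l (m + mnm1)%MM = bweight l m * \prod_(i < n) bratio l (m i).
Proof.
move=> l0; rewrite /bweight -big_split; apply: eq_bigr => i _ /=.
by rewrite mnmDE mnmE addn1 fact_div_risingS.
Qed.

Lemma bweight_mnm1 l : 0 < l -> bweight l mnm1 = \prod_(i < n) bratio l 0.
Proof.
move=> l0; rewrite -[mnm1]add0m bweight_addmnm1 // bweight0 mul1r.
by apply: eq_bigr => i _; rewrite mnm0E.
Qed.

Lemma bweight_addmnm1_ge l m : 1 < l -> m != 0%MM ->
  bweight l mnm1 * bgain l * bweight l m <= bweight l (m + mnm1)%MM.
Proof.
move=> l1 m_neq0; have l0 : 0 < l by apply: lt_trans l1.
have /existsP[i0 mi0_neq0] : [exists i, m i != 0%N].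
  rewrite -negb_forall; apply: contra m_neq0 => /forallP m0.
  by apply/eqP/mnmP => i; rewrite mnm0E; apply/eqP.
have r0_gt0 := bratio_gt0 0 l0.
rewrite bweight_addmnm1 // bweight_mnm1 // mulrC ler_pM2l ?bweight_gt0 //.
rewrite (bigD1 i0) // [leRHS](bigD1 i0) //= mulrAC.
apply: ler_pM.
- by rewrite ltW // mulr_gt0 // (lt_trans ltr01) ?bgain_gt1.
- by apply: prodr_ge0 => i _; rewrite ltW.
- by rewrite /bgain mulrC divfK ?gt_eqF // bratio_homo ?ltW // lt0n.
- by apply: ler_prod => i _; rewrite ltW //= bratio_homo ?ltW.
Qed.

Lemma bnorm2_le_mulopX_mnm1 l a B : 1 < l -> a 0%MM = 0 ->
  bnorm2_le l (mulop 'X_[mnm1] a) B ->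
  bnorm2_le l a (B / (bweight l mnm1 * bgain l)).
Proof.
move=> l1 a0 bound s s_uniq; have l0 : 0 < l by apply: lt_trans l1.
have gain_gt0 : 0 < bweight l mnm1 * bgain l.
  by rewrite mulr_gt0 ?bweight_gt0 ?(lt_trans ltr01 (bgain_gt1 l1)).
have shifted_uniq : uniq [seq (m + mnm1)%MM | m <- s].
  by rewrite map_inj_uniq // => ? ? /addIm.
rewrite ler_pdivlMr // mulr_suml.
apply: le_trans (bound _ shifted_uniq); rewrite big_map; apply: ler_sum => m _.
rewrite mulopX_shift.
have [->|m_neq0] := eqVneq m 0%MM; first by rewrite a0 sqmod0 !mulr0 mul0r.
by rewrite mulrAC ler_wpM2r ?sqmod_ge0 // mulrC bweight_addmnm1_ge.
Qed.

End Bergman.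

Arguments monom {R n}.
Arguments mnm1 {n}.

Theorem proposition4p19 (R : realType) (n : nat) (l : R) :
  (1 < n)%N -> 1 < l ->
  ~ exists U : coeffs R n -> coeffs R n, intertwining_unitary l U.
Proof.
move=> n_gt1 l_gt1 [U [U_sign _ U_isometry _ U_intertwines]].
have l_gt0 : 0 < l by apply: lt_trans l_gt1.
have triv_1 : in_triv l (monom (0%MM : 'X_{1..n})).
  by apply: in_triv_monom => // i j; rewrite !mnm0E.
have triv_e : in_triv l (monom (@mnm1 n)).
  by apply: in_triv_monom => // i j; rewrite !mnmE.
set b := U (monom 0%MM).
have b0 : b 0%MM = 0.
  apply: (sign_coeff_eq0 (i := Ordinal (ltnW n_gt1)) (j := Ordinal n_gt1) (U_sign _ triv_1)).
    by [].
  by rewrite !mnm0E.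
have Ub : U (monom mnm1) = mulop 'X_[mnm1] b.
  rewrite -[in LHS](add0m mnm1) -mulopX_monom U_intertwines //.
  by apply: mpolyX_const_sym => i j; rewrite !mnmE.
have : bnorm2_le l (mulop 'X_[mnm1] b) (bweight l (@mnm1 n)).
  by rewrite -Ub; apply/(U_isometry _ triv_e _)/bnorm2_le_monom.
move/(bnorm2_le_mulopX_mnm1 l_gt1 b0)/(U_isometry _ triv_1)/(bnorm2_le_coeff 0%MM).
rewrite bweight0 /monom eqxx sqmod1 mul1r invfM mulrA divff ?mul1r; last first.
  by rewrite gt_eqF ?bweight_gt0.
rewrite invf_ge1 ?(lt_trans ltr01 (bgain_gt1 l_gt1)) //.
by rewrite leNgt bgain_gt1.
Qed.
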